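(* Let $G$ be an undirected unweighted graph on $n\ge 2$ vertices with strong connectivity $k\ge 1$ such that no vertex-induced subgraph of $G$ has strong connectivity at least $2k$. Then $G$ has $\Theta(nk)$ edges, i.e. there are absolute constants $a,b>0$ with $ank\le |E(G)|\le bnk$.
   Context: The strong connectivity of a graph is the size of its minimum cut (the minimum, over $\emptyset\ne S\subsetneq V$, of the number of edges between $S$ and $V\setminus S$); a graph is strongly $k$-connected if it has no cut of size less than $k$. Subgraphs considered are vertex-induced subgraphs on at least two vertices. *)

From mathcomp Require Import all_boot all_order all_algebra.
Set Implicit Arguments. Unset Strict Implicit. Unset Printing Implicit Defensive.

Definition simple_graph (T : finType) (e : rel T) : Prop :=
  symmetric e /\ irreflexive e.

Definition edges (T : finType) (e : rel T) : {set {set T}} :=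
  [set A : {set T} | [exists x, exists y, (x != y) && e x y && (A == [set x; y])]].

(* Number of edges of the subgraph induced on U between S and U \ S
   (counted as ordered pairs (x,y), x in S, y in U\S; for a symmetric
   relation this counts each such undirected edge exactly once). *)
Definition cut_size (T : finType) (e : rel T) (U S : {set T}) : nat :=
  #|[set p : T * T | (p.1 \in S) && (p.2 \in U :\: S) && e p.1 p.2]|.

Definition strongly_conn (T : finType) (e : rel T) (U : {set T}) (k : nat) : bool :=
  [forall S : {set T}, ((S \subset U) && (S != set0) && (S != U)) ==> (k <= cut_size e U S)].

Definition strong_connectivity_is (T : finType) (e : rel T) (U : {set T}) (c : nat) : bool :=
  strongly_conn e U c && ~~ strongly_conn e U c.+1.

From mathcomp Require Import all_boot all_order all_algebra.
From mathcomp Require Import zify lra.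
Import GRing.Theory Num.Theory.

Set Implicit Arguments.
Unset Strict Implicit.
Unset Printing Implicit Defensive.

(* Let a(U) be the number of ordered adjacent pairs inside U, i.e. twice the
   number of edges of G[U], so that a(V) = 2|E|.  A singleton {x} is a side of
   a cut of G whose size is at most deg x, so every degree is at least k and
   nk <= a(V).  Conversely every U with at least two vertices is not strongly
   2k-connected, so it splits into S and U \ S across at most 2k-1 edges;
   since a(U) = a(S) + a(U \ S) + 2 cut(S), induction on |U| gives
   a(U) <= 2(2k-1)(|U|-1), whence |E| <= 2nk. *)

Lemma set2_eq_cases (T : finType) (a b c d : T) :
  [set a; b] = [set c; d] -> (a = c /\ b = d) \/ (a = d /\ b = c).
Proof.
move=> eq_ab_cd.
have := set21 c d; have := set22 c d; rewrite -eq_ab_cd !inE.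
have := set21 a b; have := set22 a b; rewrite eq_ab_cd !inE.
by do 4 case/orP=> /eqP ?; subst; tauto.
Qed.

Section InducedArcs.
Variables (T : finType) (e : rel T).

Definition arc_count (U : {set T}) : nat := \sum_(x in U) \sum_(y in U) e x y.

Lemma card_arcs_between (A B : {set T}) :
  #|[set p : T * T | (p.1 \in A) && (p.2 \in B) && e p.1 p.2]| =
  \sum_(x in A) \sum_(y in B) e x y.
Proof.
rewrite pair_big_dep -sum1_card big_mkcond [RHS]big_mkcond /=.
by apply: eq_bigr => p _; rewrite inE; case: ((p.1 \in A) && _); case: (e _ _).
Qed.

Hypothesis e_sym : symmetric e.
Hypothesis e_irr : irreflexive e.

Lemma arc_count_set1 x : arc_count [set x] = 0.
Proof. by rewrite /arc_count !big_set1 e_irr. Qed.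

Lemma arc_count_split (U S : {set T}) : S \subset U ->
  arc_count U = arc_count S + arc_count (U :\: S) + 2 * cut_size e U S.
Proof.
move=> sSU; rewrite /arc_count /cut_size card_arcs_between.
have splitU F : \sum_(y in U) F y = \sum_(y in S) F y + \sum_(y in U :\: S) F y.
  by rewrite (big_setID S) /= (setIidPr sSU).
rewrite splitU; under eq_bigr do rewrite splitU.
under [X in _ + X]eq_bigr do rewrite splitU.
rewrite !big_split /= [X in _ + (X + _)]exchange_big /=.
under [X in _ + (X + _)]eq_bigr do under eq_bigr do rewrite e_sym.
lia.
Qed.

Lemma not_strongly_conn_cut (U : {set T}) c :
  ~~ strongly_conn e U c.+1 ->
  exists S : {set T}, [/\ S \subset U, S != set0, S != U & cut_size e U S <= c].
Proof.
rewrite /strongly_conn => /forallPn[S].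
by rewrite negb_imply -ltnNge ltnS => /andP[/andP[/andP[]]]; exists S.
Qed.

Lemma arc_count_le_sparse_cuts c :
  (forall V : {set T}, 2 <= #|V| -> ~~ strongly_conn e V c.+1) ->
  forall U : {set T}, U != set0 -> arc_count U <= 2 * c * #|U|.-1.
Proof.
move=> sparse U; have [n] := ubnP #|U|; elim: n U => // n IHn U /ltnSE leUn U0.
have [U1 | U2] := leqP #|U| 1.
  have /cards1P[x ->] : #|U| == 1 by rewrite eqn_leq U1 card_gt0.
  by rewrite arc_count_set1.
have [S [sSU S0 SU cutS]] := not_strongly_conn_cut (sparse U U2).
have D0 : U :\: S != set0.
  by rewrite setD_eq0; apply: contra SU => sUS; rewrite eqEsubset sSU sUS.
have cardD : #|U :\: S| = #|U| - #|S| by rewrite cardsD (setIidPr sSU).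
have ltSU : #|S| < #|U| by rewrite proper_card // properEneq SU.
have := IHn (U :\: S); have := IHn S.
rewrite (arc_count_split sSU) -!card_gt0 cardD in S0 D0 *.
nia.
Qed.

Let arcs := [set p : T * T | e p.1 p.2].

Lemma edges_imset : edges e = (fun p => [set p.1; p.2]) @: arcs.
Proof.
apply/setP=> A; rewrite inE; apply/existsP/imsetP => [[x /existsP[y]] | [[x y]]].
  by case/andP=> /andP[_ exy] /eqP ->; exists (x, y); rewrite ?inE.
rewrite inE /= => exy ->; exists x; apply/existsP; exists y.
by rewrite exy eqxx !andbT; case: eqP exy => // ->; rewrite e_irr.
Qed.

Lemma card_arcs : #|arcs| = 2 * #|edges e|.
Proof.
rewrite -sum1_card (partition_big_imset (fun p => [set p.1; p.2])) edges_imset.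
rewrite mulnC -sum_nat_const; apply: eq_bigr => _ /imsetP[[x y] + ->].
rewrite inE /= => exy; rewrite sum1dep_card.
have xy : x != y by case: eqP exy => // ->; rewrite e_irr.
transitivity #|[set (x, y); (y, x)]|; last by rewrite cards2 xpair_eqE negb_and xy.
apply: eq_card => -[u v]; rewrite !inE /= !xpair_eqE.
apply/andP/orP => [[_ /eqP/set2_eq_cases] | [] /andP[/eqP-> /eqP->]].
- by case=> -[-> ->]; [left | right]; rewrite !eqxx.
- by rewrite exy.
- by rewrite e_sym exy setUC.
Qed.

Lemma arc_count_setT : arc_count [set: T] = 2 * #|edges e|.
Proof.
by rewrite -card_arcs /arc_count -card_arcs_between; apply: eq_card => p; rewrite !inE.
Qed.

Lemma card_mul_le_arc_count k :
  1 < #|T| -> strongly_conn e [set: T] k -> #|T| * k <= arc_count [set: T].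
Proof.
move=> T2 conn; rewrite /arc_count -cardsT -sum_nat_const; apply: leq_sum => x _.
have x_proper : [set x] != [set: T].
  by apply: contraTneq T2 => x_all; rewrite -cardsT -x_all cards1.
have := forallP conn [set x]; rewrite subsetT -card_gt0 cards1 x_proper /=.
move/leq_trans; apply.
by rewrite /cut_size card_arcs_between big_set1 [X in _ <= X](big_setID [set x]) leq_addl.
Qed.
End InducedArcs.

Local Open Scope ring_scope.

Theorem mainTheorem11 :
  exists a b : rat, 0 < a /\ 0 < b /\
  forall (T : finType) (e : rel T) (k : nat),
    simple_graph e ->
    (2 <= #|T|)%N ->
    (1 <= k)%N ->
    strong_connectivity_is e [set: T] k ->
    (forall U : {set T}, (2 <= #|U|)%N -> ~~ strongly_conn e U (2 * k)) ->
    a * (#|T| * k)%:R <= (#|edges e|)%:R /\ (#|edges e|)%:R <= b * (#|T| * k)%:R.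
Proof.
exists (1 / 2), 2; do 2 split => //.
move=> T e k [e_sym e_irr] T2 k_gt0 /andP[conn _] sparse.
have lower := card_mul_le_arc_count T2 conn.
have sparse' : forall U : {set T}, (2 <= #|U|)%N -> ~~ strongly_conn e U (2 * k).-1.+1.
  by rewrite prednK ?muln_gt0.
have /(arc_count_le_sparse_cuts e_sym e_irr sparse') upper : [set: T] != set0.
  by rewrite -card_gt0 cardsT ltnW.
rewrite arc_count_setT // cardsT in lower upper.
have upper' : (#|edges e| <= 2 * (#|T| * k))%N by nia.
split; [move: lower | move: upper']; rewrite -(ler_nat rat) !natrM; lra.
Qed.
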